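(* Let $M$ be a $3\times 3$ integer matrix, all of whose eigenvalues have modulus $>1$, let $m=|\det M|$, and let $T\subset\mathbb R^3$ be a self-affine lattice tile with respect to $M$ (and some standard digit set). If $T$ is conjugate to a self-similar tile, then at least one of the following holds: (i) $m$ is the cube of an integer; in particular $m\ge 8$; (ii) there is $s\in\{+1,-1\}$ such that $M$ is similar over $\mathbb R$ to the matrix $\begin{pmatrix}0&0&s\,m\\1&0&0\\0&1&0\end{pmatrix}$ (equivalently, the characteristic polynomial of $M$ is $\lambda^3-s\,m$).
   Context: A self-affine lattice tile with respect to an integer expanding matrix $M$ (all eigenvalues of modulus $>1$) is the unique nonempty compact set $T$ with $MT=\bigcup_{j=1}^m (T+k_j)$, where $m=|\det M|$ and $\{k_1,\dots,k_m\}\subset\mathbb Z^3$ is a complete set of residues of $\mathbb Z^3$ modulo $M\mathbb Z^3$ (a standard digit set). $T$ is conjugate to a self-similar tile if there is an invertible linear map $h$ of $\mathbb R^3$ such that $hMh^{-1}$ is a positive multiple of an orthogonal map; in that case all eigenvalues of $M$ have the same modulus. *)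

From Stdlib Require Import Reals.
From HB Require Import structures.
From mathcomp Require Import all_boot all_order all_algebra all_field.
Unset Printing Implicit Defensive.
Import Order.TTheory GRing.Theory Num.Theory.

Definition expanding (M : 'M[int]_3) : Prop :=
  forall z : algC, eigenvalue (map_mx (fun a : int => (a%:~R : algC)%R) M) z ->
    (1 < `|z|)%R.

Definition mdet (M : 'M[int]_3) : nat := absz (\det M)%R.

Definition standard_digits (M : 'M[int]_3) (k : 'I_(mdet M) -> 'cV[int]_3) : Prop :=
  forall v : 'cV[int]_3, exists! j : 'I_(mdet M), exists w : 'cV[int]_3,
    v = (k j + M *m w)%R.

Definition vecR := 'I_3 -> R.
Definition matR := 'I_3 -> 'I_3 -> R.

Definition i0 : 'I_3 := @Ordinal 3 0 isT.
Definition i1 : 'I_3 := @Ordinal 3 1 isT.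
Definition i2 : 'I_3 := @Ordinal 3 2 isT.

Definition sum3 (f : 'I_3 -> R) : R := Rplus (Rplus (f i0) (f i1)) (f i2).

Definition intR (z : int) : R :=
  match z with Posz n => INR n | Negz n => Ropp (INR n.+1) end.

Definition mxR (A : 'M[int]_3) : matR := fun i j => intR (A i j).
Definition cvR (v : 'cV[int]_3) : vecR := fun i => intR (v i ord0).

Definition matvec (A : matR) (x : vecR) : vecR :=
  fun i => sum3 (fun j => Rmult (A i j) (x j)).
Definition matmul (A B : matR) : matR :=
  fun i j => sum3 (fun l => Rmult (A i l) (B l j)).
Definition idR : matR := fun i j => if i == j then R1 else R0.
Definition trR (A : matR) : matR := fun i j => A j i.
Definition scaleR (c : R) (A : matR) : matR := fun i j => Rmult c (A i j).
Definition vadd (x y : vecR) : vecR := fun i => Rplus (x i) (y i).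

Definition inverse_pair (h g : matR) : Prop := matmul h g = idR /\ matmul g h = idR.

Definition orthogonal (Q : matR) : Prop := matmul (trR Q) Q = idR.

Definition dist3 (x y : vecR) : R :=
  sqrt (sum3 (fun i => Rsqr (Rminus (x i) (y i)))).

Definition bounded3 (T : vecR -> Prop) : Prop :=
  exists r : R, forall x, T x -> Rle (dist3 x (fun _ => R0)) r.
Definition closed3 (T : vecR -> Prop) : Prop :=
  forall x, (forall eps, Rlt 0 eps -> exists y, T y /\ Rlt (dist3 x y) eps) -> T x.
Definition compact3 (T : vecR -> Prop) : Prop := bounded3 T /\ closed3 T.

Definition self_affine_tile (M : 'M[int]_3) (k : 'I_(mdet M) -> 'cV[int]_3)
    (T : vecR -> Prop) : Prop :=
  (exists x, T x) /\ compact3 T /\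
  forall x : vecR,
    (exists y, T y /\ x = matvec (mxR M) y) <->
    (exists (j : 'I_(mdet M)) y, T y /\ x = vadd y (cvR (k j))).

Definition conj_self_similar (M : 'M[int]_3) : Prop :=
  exists (h g : matR) (c : R) (Q : matR),
    inverse_pair h g /\ Rlt 0 c /\ orthogonal Q /\
    matmul (matmul h (mxR M)) g = scaleR c Q.

Definition companion (s : int) (m : nat) : 'M[int]_3 :=
  \matrix_(i < 3, j < 3)
    (if (i == 0%N :> nat) && (j == 2%N :> nat) then (s * m%:Z)%R
     else if (i == j.+1 :> nat) then 1 else 0)%R.

Definition similar_over_R (A B : 'M[int]_3) : Prop :=
  exists P Pinv : matR, inverse_pair P Pinv /\
    matmul (matmul P (mxR A)) Pinv = mxR B.

(* Write M ~ c Q with c > 0 and Q orthogonal.  The trace t, the sum u of the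
   principal 2-minors and the determinant d are similarity invariants, and for Q
   one has det Q = +-1 and u(Q) = det Q tr Q (as adj Q = det Q Q^T); hence
   c^2 u = d t and d^2 = c^6, so c^3 = m.  If m is a cube, m > 1 because the
   eigenvalues of M multiply to +-det M, so m >= 8.  Otherwise c is irrational:
   t <> 0 would give c = m u / (d t), so t = 0, then u = 0, and M^3 = d by
   Cayley-Hamilton.  A linear dependence among e_0, M e_0, M^2 e_0 would produce
   a rational cube root of d, so these vectors form a basis, in which M is the
   companion matrix of X^3 - d. *)

From Pilot Require Import Defs.
From Stdlib Require Import Reals Lra Psatz Classical FunctionalExtensionality.
From HB Require Import structures.
From mathcomp Require Import all_boot all_order all_algebra all_field.
Import Order.TTheory GRing.Theory Num.Theory.

Lemma prodr_gt1 {R : numDomainType} {I : eqType} (r : seq I) (F : I -> R) :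
  r != [::] -> (forall i, i \in r -> 1 < F i)%R -> (1 < \prod_(i <- r) F i)%R.
Proof.
elim: r => [|i r IH] //= _ F_gt1; rewrite big_cons.
have Fi : (1 < F i)%R by apply: F_gt1; rewrite mem_head.
have [->|r0] := eqVneq r [::]; first by rewrite big_nil mulr1.
by apply: mulr_egt1 => //; apply: IH => // j jr; apply: F_gt1; rewrite in_cons jr orbT.
Qed.

Lemma expanding_mdet_gt1 (M : 'M[int]_3) : expanding M -> (1 < mdet M)%N.
Proof.
move=> Hexp; set B := map_mx (fun a : int => (a%:~R : algC)%R) M.
have [r Er] := closed_field_poly_normal (char_poly B).
rewrite (monicP (char_poly_monic B)) scale1r in Er.
have size_r : size r = 3.
  by have := size_char_poly B; rewrite Er size_prod_XsubC => -[].
have detB : (\det B = \prod_(z <- r) z)%R.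
  have := char_poly_det B; rewrite Er coef0_prod_XsubC size_r => /mulfI -> //.
  by rewrite signr_eq0.
have : (1 < `|\det B|)%R.
  rewrite detB normr_prod; apply: prodr_gt1; first by rewrite -size_eq0 size_r.
  move=> z zr; apply: Hexp; rewrite eigenvalue_root_char Er.
  by rewrite root_prod_XsubC.
by rewrite det_map_mx -intr_norm ltr1z -abszE ltz_nat.
Qed.

Local Open Scope R_scope.

Lemma ord3P (i : 'I_3) : i = i0 \/ i = i1 \/ i = i2.
Proof.
case: i => [[|[|[|n]]] Hn]; [left|right; left|right; right|by []]; exact: val_inj.
Qed.

Lemma ord3_ind (P : 'I_3 -> Prop) : P i0 -> P i1 -> P i2 -> forall i, P i.
Proof. by move=> ? ? ? i; case: (ord3P i) => [->|[->|->]]. Qed.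

Lemma matR_ext (X Y : matR) : (forall i j, X i j = Y i j) -> X = Y.
Proof. by move=> XY; do 2 (apply: functional_extensionality => ?); apply: XY. Qed.

Ltac entrywise := apply: matR_ext; apply: ord3_ind; apply: ord3_ind.

Lemma ordS_i0 : ordS i0 = i1. Proof. exact: val_inj. Qed.
Lemma ordS_i1 : ordS i1 = i2. Proof. exact: val_inj. Qed.
Lemma ordS_i2 : ordS i2 = i0. Proof. exact: val_inj. Qed.

Definition tr3 (X : matR) : R := X i0 i0 + X i1 i1 + X i2 i2.

Definition det3 (X : matR) : R :=
  X i0 i0 * (X i1 i1 * X i2 i2 - X i1 i2 * X i2 i1)
  - X i0 i1 * (X i1 i0 * X i2 i2 - X i1 i2 * X i2 i0)
  + X i0 i2 * (X i1 i0 * X i2 i1 - X i1 i1 * X i2 i0).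

(* The cofactor formula for 3x3 matrices, with indices read mod 3. *)
Definition adjR (X : matR) : matR := fun i j =>
  X (ordS j) (ordS i) * X (ordS (ordS j)) (ordS (ordS i))
  - X (ordS j) (ordS (ordS i)) * X (ordS (ordS j)) (ordS i).

Definition u3 (X : matR) : R := tr3 (adjR X).

Ltac mx_unfold := rewrite /u3 /tr3 /det3 /adjR /matmul /sum3 /scaleR /trR /idR
  ?(ordS_i0, ordS_i1, ordS_i2) /=.

Lemma adjR_mul X Y : adjR (matmul X Y) = matmul (adjR Y) (adjR X).
Proof. entrywise; mx_unfold; ring. Qed.

Lemma mul_adjR X : matmul X (adjR X) = scaleR (det3 X) idR.
Proof. entrywise; mx_unfold; ring. Qed.

Lemma adjR_idR : adjR idR = idR.
Proof. entrywise; mx_unfold; ring. Qed.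

Lemma matmul_assoc X Y Z : matmul (matmul X Y) Z = matmul X (matmul Y Z).
Proof. by apply: matR_ext => i j; rewrite /matmul /sum3; ring. Qed.

Lemma matmul_idl X : matmul idR X = X.
Proof. entrywise; mx_unfold; ring. Qed.

Lemma matmul_idr X : matmul X idR = X.
Proof. entrywise; mx_unfold; ring. Qed.

Lemma matmul_scale_idR X c : matmul X (scaleR c idR) = scaleR c X.
Proof. entrywise; mx_unfold; ring. Qed.

Lemma tr3_mulC X Y : tr3 (matmul X Y) = tr3 (matmul Y X).
Proof. mx_unfold; ring. Qed.

Lemma det3_mul X Y : det3 (matmul X Y) = det3 X * det3 Y.
Proof. mx_unfold; ring. Qed.

Lemma det3_idR : det3 idR = 1.
Proof. mx_unfold; ring. Qed.

Lemma det3_trR X : det3 (trR X) = det3 X.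
Proof. mx_unfold; ring. Qed.

Lemma tr3_scale c X : tr3 (scaleR c X) = c * tr3 X.
Proof. mx_unfold; ring. Qed.

Lemma u3_scale c X : u3 (scaleR c X) = c ^ 2 * u3 X.
Proof. mx_unfold; ring. Qed.

Lemma det3_scale c X : det3 (scaleR c X) = c ^ 3 * det3 X.
Proof. mx_unfold; ring. Qed.

Section Similarity.
Context {h g : matR}.
Hypothesis hg : inverse_pair h g.

Lemma tr3_similar A : tr3 (matmul (matmul h A) g) = tr3 A.
Proof. by rewrite tr3_mulC -matmul_assoc (proj2 hg) matmul_idl. Qed.

Lemma u3_similar A : u3 (matmul (matmul h A) g) = u3 A.
Proof.
rewrite /u3 !adjR_mul tr3_mulC matmul_assoc -adjR_mul (proj2 hg) adjR_idR.
by rewrite matmul_idr.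
Qed.

Lemma det3_similar A : det3 (matmul (matmul h A) g) = det3 A.
Proof.
have dgh : det3 g * det3 h = 1 by rewrite -det3_mul (proj2 hg) det3_idR.
rewrite !det3_mul -[RHS]Rmult_1_r -dgh; ring.
Qed.

End Similarity.

Lemma orthogonal_det3_sqr {Q} : Defs.orthogonal Q -> det3 Q * det3 Q = 1.
Proof. by move=> HQ; rewrite -{1}det3_trR -det3_mul HQ det3_idR. Qed.

(* From [Q^T Q = 1] and [Q adj Q = det Q], the adjugate of [Q] is [det Q Q^T]. *)
Lemma orthogonal_u3 {Q} : Defs.orthogonal Q -> u3 Q = det3 Q * tr3 Q.
Proof.
move=> HQ; have adjQ : adjR Q = scaleR (det3 Q) (trR Q).
  by rewrite -[adjR Q]matmul_idl -HQ matmul_assoc mul_adjR matmul_scale_idR.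
by rewrite /u3 adjQ tr3_scale.
Qed.

Lemma self_similar_invariants {A h g Q : matR} {c : R} :
  inverse_pair h g -> Defs.orthogonal Q -> matmul (matmul h A) g = scaleR c Q ->
  c ^ 2 * u3 A = det3 A * tr3 A /\ det3 A * det3 A = c ^ 6.
Proof.
move=> hg HQ hAg.
have eT : tr3 A = c * tr3 Q by rewrite -(tr3_similar hg) hAg tr3_scale.
have eU : u3 A = c ^ 2 * u3 Q by rewrite -(u3_similar hg) hAg u3_scale.
have eD : det3 A = c ^ 3 * det3 Q by rewrite -(det3_similar hg) hAg det3_scale.
have dQ := orthogonal_det3_sqr HQ.
rewrite eT eU eD orthogonal_u3 //; split; first ring.
rewrite -[RHS]Rmult_1_r -dQ; ring.
Qed.

Lemma cayley_hamilton3 X i j : matmul X (matmul X X) i j =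
  tr3 X * matmul X X i j - u3 X * X i j + det3 X * idR i j.
Proof. by move: i j; apply: ord3_ind; apply: ord3_ind; mx_unfold; ring. Qed.

Lemma cube_traceless {X} : tr3 X = 0 -> u3 X = 0 ->
  matmul X (matmul X X) = scaleR (det3 X) idR.
Proof.
by move=> t0 u0; apply: matR_ext => i j; rewrite cayley_hamilton3 t0 u0 /scaleR; ring.
Qed.

Definition invR (X : matR) : matR := scaleR (/ det3 X) (adjR X).

Lemma invR_inverse_pair {X} : det3 X <> 0 -> inverse_pair (invR X) X.
Proof. by move=> dX; split; entrywise; rewrite /invR; move: dX; mx_unfold => dX; field. Qed.

(* The matrix with columns [e_0], [A e_0], [A^2 e_0]. *)
Definition krylov (A : matR) : matR := fun i j =>
  match nat_of_ord j with 0 => idR i i0 | 1 => A i i0 | _ => matmul A A i i0 end.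

Definition companionR (d : R) : matR := fun i j =>
  match nat_of_ord i, nat_of_ord j with 0, 2 => d | 1, 0 => 1 | 2, 1 => 1 | _, _ => 0 end.

Lemma krylov_companion {A d} : matmul A (matmul A A) = scaleR d idR ->
  matmul A (krylov A) = matmul (krylov A) (companionR d).
Proof.
move=> A3; apply: matR_ext => i; apply: ord3_ind.
all: move: (f_equal (fun X => X i i0) A3); mx_unfold.
all: move: i; apply: ord3_ind; rewrite /krylov /companionR; mx_unfold; lra.
Qed.

Lemma i1_neq_i0 : i1 <> i0. Proof. by move/(congr1 val). Qed.
Lemma i2_neq_i0 : i2 <> i0. Proof. by move/(congr1 val). Qed.

Lemma idR_neq {i j} : i <> j -> idR i j = 0.
Proof. by rewrite /idR => /eqP/negbTE ->. Qed.

Section CubeRoot.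
Context {A : matR} {d : R}.
Hypothesis A3 : matmul A (matmul A A) = scaleR d idR.

(* Applying [A] to [A^2 e_0 = lam A e_0 + mu e_0] expresses [A^3 e_0 = d e_0] in
   terms of [A e_0] and [e_0]; a nonzero coordinate of [A e_0] off [e_0] then
   forces [mu = - lam^2] and [d = - lam^3]. *)
Lemma cube_root_of_dependence {lam mu k} :
  (forall i, matmul A A i i0 = lam * A i i0 + mu * idR i i0) ->
  k <> i0 -> A k i0 <> 0 -> d = - lam ^ 3.
Proof.
move=> dep k0 ak.
have A3e i : d * idR i i0 = (lam ^ 2 + mu) * A i i0 + lam * mu * idR i i0.
  have -> : d * idR i i0 = matmul A (matmul A A) i i0 by rewrite A3.
  have sq : A i i0 * A i0 i0 + A i i1 * A i1 i0 + A i i2 * A i2 i0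
            = lam * A i i0 + mu * idR i i0 by rewrite -dep.
  rewrite {1}/matmul /sum3 !dep (_ : idR i0 i0 = 1) //.
  rewrite (idR_neq i1_neq_i0) (idR_neq i2_neq_i0).
  transitivity (lam * (A i i0 * A i0 i0 + A i i1 * A i1 i0 + A i i2 * A i2 i0)
                + mu * A i i0); first ring.
  rewrite sq; ring.
have mu_eq : mu = - lam ^ 2.
  have := A3e k; rewrite idR_neq // => Ak.
  have /Rmult_integral [] : (lam ^ 2 + mu) * A k i0 = 0 by lra.
  - lra.
  - by move/ak.
have := A3e i0; rewrite /idR /= mu_eq; lra.
Qed.

Lemma krylov_singular : det3 (krylov A) = 0 ->
  d = A i0 i0 ^ 3 \/
  exists k, A k i0 <> 0 /\ d * A k i0 ^ 3 = (- matmul A A k i0) ^ 3.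
Proof.
have -> : det3 (krylov A) = A i1 i0 * matmul A A i2 i0 - A i2 i0 * matmul A A i1 i0.
  by rewrite /det3 /krylov /idR /=; ring.
move=> dK.
have [[a1 a2]|[k [k0 ak]]] :
    (A i1 i0 = 0 /\ A i2 i0 = 0) \/ exists k, k <> i0 /\ A k i0 <> 0.
  case: (Req_dec (A i1 i0) 0) => a1; last by right; exists i1; split=> //; apply: i1_neq_i0.
  case: (Req_dec (A i2 i0) 0) => a2; last by right; exists i2; split=> //; apply: i2_neq_i0.
  by left.
- left.
  have := f_equal (fun X => X i0 i0) A3; rewrite /matmul /sum3 /scaleR /idR /= a1 a2.
  move=> A3_00; transitivity (d * R1); first ring.
  rewrite -A3_00; ring.
- right; exists k; split => //.
  have cross i j : i <> i0 -> j <> i0 -> A j i0 * matmul A A i i0 = A i i0 * matmul A A j i0.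
    move: i j; apply: ord3_ind; apply: ord3_ind; move=> ni nj;
    first [exact: False_ind (ni erefl) | exact: False_ind (nj erefl) | lra].
  set lam := matmul A A k i0 / A k i0.
  have dep i : matmul A A i i0 = lam * A i i0 + (matmul A A i0 i0 - lam * A i0 i0) * idR i i0.
    case: (ord3P i) => [->|ne]; first by rewrite /idR /=; ring.
    have {}ne : i <> i0 by case: ne => -> ; [apply: i1_neq_i0 | apply: i2_neq_i0].
    rewrite idR_neq // /lam; transitivity (A k i0 * matmul A A i i0 / A k i0); first by field.
    by rewrite cross //; field.
  rewrite (cube_root_of_dependence dep k0 ak) /lam; field; exact: ak.
Qed.

End CubeRoot.

Lemma intR_nat (n : nat) : intR n%:Z = INR n.
Proof. by []. Qed.

Lemma intR_oppn (n : nat) : intR (- n%:Z)%R = - INR n.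
Proof. by case: n => [|n] /=; first lra. Qed.

Lemma intR_natB (a b : nat) : intR (a%:Z - b%:Z)%R = INR a - INR b.
Proof.
case: (leqP b a) => ba.
  by rewrite subzn //= minus_INR //; apply/ssrnat.leP.
rewrite -opprB subzn ?(ltnW ba) // intR_oppn minus_INR; first lra.
by apply/ssrnat.leP/ltnW.
Qed.

Lemma int_natB (z : int) : exists a b : nat, z = (a%:Z - b%:Z)%R.
Proof.
case: z => n; first by exists n, 0%N; rewrite subr0.
by exists 0%N, n.+1; rewrite sub0r NegzE.
Qed.

Lemma intRD x y : intR (x + y)%R = intR x + intR y.
Proof.
have [a [b ->]] := int_natB x; have [c [d ->]] := int_natB y.
rewrite addrACA -opprD -!PoszD !intR_natB !plus_INR; lra.
Qed.

Lemma intRN x : intR (- x)%R = - intR x.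
Proof. have [a [b ->]] := int_natB x; rewrite opprB !intR_natB; lra. Qed.

Lemma intRB x y : intR (x - y)%R = intR x - intR y.
Proof. rewrite intRD intRN; ring. Qed.

Lemma intRM x y : intR (x * y)%R = intR x * intR y.
Proof.
have [a [b ->]] := int_natB x; have [c [d ->]] := int_natB y.
rewrite mulrBl !mulrBr !intRB -!PoszM !intR_nat !mult_INR; ring.
Qed.

Lemma intRX x n : intR (x ^+ n)%R = intR x ^ n.
Proof. by elim: n => [|n IH] //; rewrite exprS intRM IH. Qed.

Lemma intR_inj : injective intR.
Proof.
move=> x y; have [a [b ->]] := int_natB x; have [c [d ->]] := int_natB y.
rewrite !intR_natB => e.
have /INR_eq adcb : INR (a + d) = INR (c + b) by rewrite !plus_INR; lra.
by apply/eqP; rewrite subr_eq addrAC eq_sym subr_eq -!PoszD adcb.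
Qed.

Lemma INR_absz z : INR (absz z) = Rabs (intR z).
Proof.
case: z => n; first by rewrite Rabs_pos_eq //; apply: pos_INR.
change (INR n.+1 = Rabs (- INR n.+1)); rewrite Rabs_Ropp Rabs_pos_eq //; apply: pos_INR.
Qed.

Ltac intR_push := rewrite ?(intRD, intRB, intRN, intRM, intRX).

Lemma intR_sum3 (F : 'I_3 -> int) : intR (\sum_k F k)%R = sum3 (fun k => intR (F k)).
Proof.
rewrite !big_ord_recl big_ord0 addr0; intR_push; rewrite /sum3 Rplus_assoc.
have -> : lift ord0 (lift ord0 ord0) = i2 :> 'I_3 by apply: val_inj.
have -> : lift ord0 ord0 = i1 :> 'I_3 by apply: val_inj.
by have -> : ord0 = i0 by apply: val_inj.
Qed.

Lemma mxR_mul (X Y : 'M[int]_3) : matmul (mxR X) (mxR Y) = mxR (X *m Y).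
Proof.
do 2 (apply: functional_extensionality => ?); rewrite /mxR mxE intR_sum3.
by rewrite /matmul; congr sum3; apply: functional_extensionality => k; rewrite intRM.
Qed.

Lemma det3_mxR (X : 'M[int]_3) : det3 (mxR X) = intR (\det X).
Proof.
pose f i j := X (inord i) (inord j).
have -> : X = (\matrix_(i, j) f i j)%R by apply/matrixP => i j; rewrite mxE /f !inord_val.
rewrite (expand_det_row _ ord0) !big_ord_recl big_ord0 /cofactor.
rewrite !(expand_det_row _ ord0) !big_ord_recl !big_ord0 /cofactor !det_mx11 !mxE /=.
rewrite /bump /= ?(addn0, add0n, addSn, addnS) ?expr0 ?expr1 ?sqrrN ?expr1n ?mulN1r ?mul1r ?addr0.
intR_push; rewrite /det3 /mxR !mxE /=; ring.
Qed.

Definition is_cube (n : nat) : Prop := exists x, n = (x ^ 3)%N.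

Lemma is_cube_of_ratio (m a b : nat) : (0 < b)%N -> (m * b ^ 3 = a ^ 3)%N -> is_cube m.
Proof.
move=> b0 mba.
have g0 : (0 < gcdn a b)%N by rewrite gcdn_gt0 b0 orbT.
have [a' ea] : exists a', a = (a' * gcdn a b)%N by exists (a %/ gcdn a b); rewrite divnK ?dvdn_gcdl.
have [b' eb] : exists b', b = (b' * gcdn a b)%N by exists (b %/ gcdn a b); rewrite divnK ?dvdn_gcdr.
have cop : coprime a' b'.
  by rewrite /coprime -(eqn_pmul2r g0) mul1n muln_gcdl -ea -eb.
have mba' : (m * b' ^ 3 = a' ^ 3)%N.
  apply/eqP; rewrite -(@eqn_pmul2r (gcdn a b ^ 3)) ?expn_gt0 ?g0 //.
  by rewrite -mulnA -!expnMn -ea -eb mba.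
have b'1 : (b' ^ 3 = 1)%N.
  have : coprime (b' ^ 3) (a' ^ 3) by rewrite coprimeXl // coprimeXr // coprime_sym.
  by rewrite /coprime; move/gcdn_idPl: (dvdn_mull m (dvdnn (b' ^ 3))); rewrite mba' => -> /eqP.
by exists a'; rewrite -mba' b'1 muln1.
Qed.

Lemma is_cube_of_int_ratio (m : nat) (d p q : int) :
  absz d = m -> q != 0%R -> (d * q ^+ 3 = p ^+ 3)%R -> is_cube m.
Proof.
move=> <- q0 /(congr1 absz); rewrite abszM !abszX => e.
by apply: (@is_cube_of_ratio _ (absz p) (absz q)); rewrite ?absz_gt0.
Qed.

Lemma is_cube_of_rational_root (m : nat) (c : R) (p q : int) :
  0 < c -> c ^ 3 = INR m -> q <> 0%R -> c * intR q = intR p -> is_cube m.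
Proof.
move=> c0 cm q0 cqp; apply: (@is_cube_of_int_ratio m m p q) => //.
  exact/eqP.
by apply: intR_inj; intR_push; rewrite -cqp intR_nat -cm; ring.
Qed.

Lemma int_sign (z : int) : exists s : int, (s = 1%R \/ s = (-1)%R) /\ (s * (absz z)%:Z = z)%R.
Proof.
case: z => n; first by exists 1%R; split; [left | rewrite mul1r].
by exists (-1)%R; split; [right | rewrite NegzE mulN1r].
Qed.

Lemma cube_of_abs_sqr {c D : R} {m : nat} :
  0 < c -> D * D = c ^ 6 -> Rabs D = INR m -> c ^ 3 = INR m.
Proof.
move=> c0 DD <-; have := Rabs_pos D; have : 0 < c ^ 3 by apply: pow_lt.
have : Rabs D * Rabs D = c ^ 3 * c ^ 3 by rewrite -Rabs_mult Rabs_pos_eq DD; nra.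
nra.
Qed.

Lemma cube_ge8 (x : nat) : (1 < x ^ 3)%N -> (8 <= x ^ 3)%N.
Proof. by case: x => [|[|x]] // _; rewrite (leq_exp2r 2 x.+2 (ltn0Sn 2)). Qed.

Lemma mxR_invariants_int (X : 'M[int]_3) :
  exists t u : int, tr3 (mxR X) = intR t /\ u3 (mxR X) = intR u.
Proof.
exists (X i0 i0 + X i1 i1 + X i2 i2)%R.
exists (X i1 i1 * X i2 i2 - X i1 i2 * X i2 i1 + X i2 i2 * X i0 i0 - X i2 i0 * X i0 i2
        + X i0 i0 * X i1 i1 - X i0 i1 * X i1 i0)%R.
by split; intR_push; rewrite /mxR; mx_unfold; ring.
Qed.

Lemma companion_mxR (s : int) (m : nat) : mxR (companion s m) = companionR (intR (s * m%:Z)).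
Proof. by entrywise; rewrite /mxR /companion mxE. Qed.

Lemma noncube_invariants_vanish {m : nat} {c : R} {t u d : int} :
  0 < c -> c ^ 3 = INR m -> absz d = m -> c ^ 2 * intR u = intR d * intR t ->
  ~ is_cube m -> t = 0%R /\ u = 0%R.
Proof.
move=> c0 cm dm rel ncube.
have d0 : d != 0%R.
  by apply/eqP => d0; move: cm; rewrite -dm d0 /=; have := pow_lt c 3 c0; lra.
have t0 : t = 0%R.
  case: (eqVneq t 0%R) => // tn0; case: ncube.
  apply: (@is_cube_of_rational_root m c (m%:Z * u) (d * t)) => //.
    by apply/eqP; rewrite mulf_neq0.
  by intR_push; rewrite intR_nat -cm -rel; ring.
split=> //; apply: intR_inj; move: rel; rewrite t0 /= Rmult_0_r => /Rmult_integral [] //.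
by have := pow_lt c 2 c0; lra.
Qed.

Lemma krylov_mxR_invertible {X : 'M[int]_3} :
  tr3 (mxR X) = 0 -> u3 (mxR X) = 0 -> ~ is_cube (mdet X) -> det3 (krylov (mxR X)) <> 0.
Proof.
move=> t0 u0 ncube /(krylov_singular (cube_traceless t0 u0)).
rewrite det3_mxR mxR_mul /mxR => -[e | [k [ak e]]]; apply: ncube.
- apply: (@is_cube_of_int_ratio _ (\det X) (X i0 i0) 1) => //.
  by apply: intR_inj; intR_push; rewrite e (_ : intR 1 = 1) //; ring.
- apply: (@is_cube_of_int_ratio _ (\det X) (- (X *m X) k i0) (X k i0)) => //.
    by apply/eqP => q0; apply: ak; rewrite q0.
  by apply: intR_inj; intR_push; rewrite e.
Qed.

Lemma similar_companion_of_noncube {X : 'M[int]_3} {c : R} :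
  0 < c -> c ^ 3 = INR (mdet X) -> c ^ 2 * u3 (mxR X) = det3 (mxR X) * tr3 (mxR X) ->
  ~ is_cube (mdet X) ->
  exists s : int, (s = 1%R \/ s = (-1)%R) /\ similar_over_R X (companion s (mdet X)).
Proof.
move=> c0 cm rel ncube.
have [t [u [Et Eu]]] := mxR_invariants_int X.
have [t0 u0] : t = 0%R /\ u = 0%R.
  by apply: (noncube_invariants_vanish c0 cm erefl _ ncube); rewrite -Et -Eu -det3_mxR.
rewrite {}t0 in Et; rewrite {}u0 in Eu.
have [s [Hs sm]] := int_sign (\det X).
exists s; split=> //.
have dK := krylov_mxR_invertible Et Eu ncube.
exists (invR (krylov (mxR X))), (krylov (mxR X)); split; first exact: invR_inverse_pair.
rewrite matmul_assoc (krylov_companion (cube_traceless Et Eu)) -matmul_assoc.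
by rewrite (proj1 (invR_inverse_pair dK)) matmul_idl companion_mxR sm det3_mxR.
Qed.

Lemma self_similar_scale {X : 'M[int]_3} : conj_self_similar X ->
  exists c, 0 < c /\ c ^ 3 = INR (mdet X) /\
    c ^ 2 * u3 (mxR X) = det3 (mxR X) * tr3 (mxR X).
Proof.
move=> [h [g [c [Q [hg [c0 [HQ hXg]]]]]]].
have [rel dd] := self_similar_invariants hg HQ hXg.
exists c; do 2 split => //.
by apply: (cube_of_abs_sqr c0 dd); rewrite det3_mxR INR_absz.
Qed.

Theorem theorem2p3 (M : 'M[int]_3) (k : 'I_(mdet M) -> 'cV[int]_3)
    (T : vecR -> Prop) :
  expanding M -> standard_digits M k -> self_affine_tile M k T ->
  conj_self_similar M ->
  ((exists a : nat, mdet M = (a ^ 3)%N) /\ (8 <= mdet M)%N) \/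
  (exists s : int, (s = 1%R \/ s = (-1)%R) /\
     similar_over_R M (companion s (mdet M))).
Proof.
move=> Hexp _ _ Hss.
case: (classic (is_cube (mdet M))) => [[x mx] | ncube].
- left; split; first by exists x.
  by rewrite mx cube_ge8 // -mx expanding_mdet_gt1.
- right; have [c [c0 [cm rel]]] := self_similar_scale Hss.
  exact: similar_companion_of_noncube c0 cm rel ncube.
Qed.
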